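(* There exists an absolute constant $C>0$ such that the following holds. Let $\tau,n,m,t\in\mathbb{N}^+$, let $W_1,\dots,W_\tau\in\mathbb{R}^{n\times m}$ be matrices, let $\alpha_1,\dots,\alpha_\tau\ge 0$ be weights, and let $S_1,\dots,S_\tau\in\mathbb{R}^{t\times n}$ be mutually independent CountSketch matrices, each with sketch size $t$. Then for any fixed $\theta\in\mathbb{R}^m$, with probability at least $0.99$, \[ \left|\,\Big\|\Big(\sum_{i=1}^{\tau}\sqrt{\alpha_i}\,S_iW_i\Big)\theta\Big\|_2^2-\sum_{i=1}^{\tau}\alpha_i\|W_i\theta\|_2^2\right|\le \frac{C}{\sqrt{t}}\sum_{i=1}^{\tau}\alpha_i\|W_i\theta\|_2^2 . \]
   Context: A CountSketch matrix $S\in\mathbb{R}^{t\times n}$ with sketch size $t$ is defined as follows: draw a 2-wise independent hash function $h:[n]\to[t]$ (so each $h(k)$ is uniformly distributed on $[t]$ and the values are pairwise independent) and, independently, a 4-wise independent hash function $\sigma:[n]\to\{-1,1\}$ (each $\sigma(k)$ uniform on $\{-1,1\}$, any four values independent). Then $S_{k,j}=\sigma(j)$ if $h(j)=k$ and $S_{k,j}=0$ otherwise; equivalently $(Sy)_k=\sum_{j:\,h(j)=k}\sigma(j)\,(y)_j$. The probability is over the randomness of $S_1,\dots,S_\tau$. *)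

From HB Require Import structures.
From mathcomp Require Import all_boot all_order all_algebra.
From mathcomp Require Import reals Rstruct.
From Stdlib Require Import Rdefinitions.
Set Implicit Arguments. Unset Strict Implicit. Unset Printing Implicit Defensive.
Import Order.TTheory GRing.Theory Num.Theory.
Local Open Scope ring_scope.

Definition is_pmf (Omega : finType) (p : Omega -> R) : Prop :=
  (forall w, 0 <= p w) /\ \sum_(w : Omega) p w = 1.

Definition Pr (Omega : finType) (p : Omega -> R) (E : Omega -> bool) : R :=
  \sum_(w : Omega | E w) p w.

Definition indep2 (Omega : finType) (p : Omega -> R) (A B : finType)
  (X : Omega -> A) (Y : Omega -> B) : Prop :=
  forall a b, Pr p (fun w => (X w == a) && (Y w == b))
              = Pr p (fun w => X w == a) * Pr p (fun w => Y w == b).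

Definition mutually_indep (Omega : finType) (p : Omega -> R) (tau : nat)
  (T : finType) (X : 'I_tau -> Omega -> T) : Prop :=
  forall f : 'I_tau -> T,
    Pr p (fun w => [forall i, X i w == f i])
    = \prod_(i < tau) Pr p (fun w => X i w == f i).

Definition two_wise_hash (Omega : finType) (p : Omega -> R) (n t : nat)
  (h : Omega -> {ffun 'I_n -> 'I_t}) : Prop :=
  (forall k j, Pr p (fun w => h w k == j) = (t%:R)^-1) /\
  (forall k1 k2 j1 j2, k1 != k2 ->
     Pr p (fun w => (h w k1 == j1) && (h w k2 == j2))
     = Pr p (fun w => h w k1 == j1) * Pr p (fun w => h w k2 == j2)).

(* sigma : [n] -> {-1,1} (true = +1, false = -1) is 4-wise independent with
   uniform values: any at most four values are independent and uniform. *)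
Definition four_wise_sign (Omega : finType) (p : Omega -> R) (n : nat)
  (s : Omega -> {ffun 'I_n -> bool}) : Prop :=
  forall (K : {set 'I_n}) (b : 'I_n -> bool), leq #|K| 4 ->
    Pr p (fun w => [forall k in K, s w k == b k]) = (2%:R^-1) ^+ #|K|.

Definition sgn (b : bool) : R := if b then 1 else -1.

Definition countsketch (n t : nat) (h : {ffun 'I_n -> 'I_t})
  (s : {ffun 'I_n -> bool}) : 'M[R]_(t, n) :=
  \matrix_(k < t, j < n) (if h j == k then sgn (s j) else 0).

Definition countsketch_family (Omega : finType) (p : Omega -> R)
  (tau n t : nat) (h : 'I_tau -> Omega -> {ffun 'I_n -> 'I_t})
  (s : 'I_tau -> Omega -> {ffun 'I_n -> bool}) : Prop :=
  mutually_indep p (fun i w => (h i w, s i w)) /\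
  (forall i, two_wise_hash p (h i)) /\
  (forall i, four_wise_sign p (s i)) /\
  (forall i, indep2 p (h i) (s i)).

Definition sqnorm (k : nat) (v : 'cV[R]_k) : R := \sum_(i < k) (v i 0) ^+ 2.

From HB Require Import structures.
From mathcomp Require Import all_boot all_order all_algebra.
From mathcomp Require Import reals Rstruct.
From Stdlib Require Import Rdefinitions.
From mathcomp Require Import ring lra.
Set Implicit Arguments. Unset Strict Implicit. Unset Printing Implicit Defensive.
Import Order.TTheory GRing.Theory Num.Theory.
Local Open Scope ring_scope.

(* Put a_i = sqrt(alpha_i) W_i theta, M = sum_i |a_i|^2, and let V be the
   distortion |sum_i S_i a_i|^2 - M.  The proof is a second-moment computation
   on the finite probability space followed by Chebyshev's inequality.
   - Finite expectations [Ex] are linear, and factor over independent variables.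
   - 4-wise independence makes every product of one to four distinct signs
     centred; this gives the second and fourth sign moments.
   - For one CountSketch S and a vector a, the coordinates of S a are centred
     with covariance [k = k'] |a|^2 / t; hence E|S a|^2 = |a|^2, and expanding
     the distortion over colliding pairs gives E(|S a|^2 - |a|^2)^2 <= 2|a|^4/t.
   - Mutual independence lets us compute under the product of the marginal
     laws, where sketch i is independent of any function of the others.
   - Adding the sketches one at a time, V_(m+1) = V_m + 2 <Z_m, S a> + D with
     all cross moments vanishing, so by induction E V^2 <= 2 M^2 / t.
   - Chebyshev at threshold 20 M / sqrt t bounds the failure by 1/200. *)

(* Expectation of [F] under the (not necessarily normalised) mass [q]. *)
Definition Ex (A : finType) (q : A -> R) (F : A -> R) : R := \sum_(a : A) F a * q a.

Section Expectation.
Variables (A : finType) (q : A -> R).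

Lemma Ex_ext F G : (forall a, F a = G a) -> Ex q F = Ex q G.
Proof. by move=> FG; apply: eq_bigr => a _; rewrite FG. Qed.

Lemma ExD F G : Ex q (fun a => F a + G a) = Ex q F + Ex q G.
Proof. by rewrite /Ex -big_split; apply: eq_bigr => a _; rewrite mulrDl. Qed.

Lemma ExB F G : Ex q (fun a => F a - G a) = Ex q F - Ex q G.
Proof. by rewrite /Ex -sumrB; apply: eq_bigr => a _; rewrite mulrBl. Qed.

Lemma ExZ c F : Ex q (fun a => c * F a) = c * Ex q F.
Proof. by rewrite /Ex mulr_sumr; apply: eq_bigr => a _; rewrite mulrA. Qed.

Lemma Ex_sum (I : finType) (P : pred I) (F : I -> A -> R) :
  Ex q (fun a => \sum_(i | P i) F i a) = \sum_(i | P i) Ex q (F i).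
Proof. by rewrite /Ex exchange_big; apply: eq_bigr => a _; rewrite mulr_suml. Qed.

Lemma Ex_const c : Ex q (fun _ => c) = c * \sum_a q a.
Proof. by rewrite /Ex mulr_sumr. Qed.

Lemma Ex_const_pmf c : is_pmf q -> Ex q (fun _ => c) = c.
Proof. by case=> _ q1; rewrite Ex_const q1 mulr1. Qed.

End Expectation.

Lemma Ex_pushforward (Om A : finType) (p : Om -> R) (Y : Om -> A) (Phi : A -> R) :
  Ex p (fun w => Phi (Y w)) = Ex (fun a => Pr p (fun w => Y w == a)) Phi.
Proof.
rewrite /Ex /Pr (partition_big Y predT) //=; apply: eq_bigr => a _.
by rewrite mulr_sumr; apply: eq_bigr => w /eqP <-; rewrite mulrC.
Qed.

Lemma Ex_indicator (Om : finType) (p : Om -> R) (E : Om -> bool) :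
  Ex p (fun w => (E w)%:R) = Pr p E.
Proof.
rewrite /Ex /Pr [RHS]big_mkcond; apply: eq_bigr => w _.
by case: (E w); rewrite ?mul1r ?mul0r.
Qed.

Lemma Ex_indep2 (Om A B : finType) (p : Om -> R) (X : Om -> A) (Y : Om -> B)
  (F : A -> R) (G : B -> R) : indep2 p X Y ->
  Ex p (fun w => F (X w) * G (Y w)) = Ex p (fun w => F (X w)) * Ex p (fun w => G (Y w)).
Proof.
move=> XY; rewrite (Ex_pushforward p (fun w => (X w, Y w)) (fun ab => F ab.1 * G ab.2)).
rewrite (Ex_pushforward p X F) (Ex_pushforward p Y G) /Ex.
rewrite -(pair_bigA _ (fun a b => F a * G b * Pr p (fun w => (X w, Y w) == (a, b)))) mulr_suml.
apply: eq_bigr => a _; rewrite mulr_sumr; apply: eq_bigr => b _ /=.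
have -> : Pr p (fun w => (X w, Y w) == (a, b)) = Pr p (fun w => (X w == a) && (Y w == b)).
  by apply: eq_bigl => w; rewrite xpair_eqE.
by rewrite XY mulrACA.
Qed.

(* Signs square to one; this is what cancels a repeated index in a sign product. *)
Lemma sgn_sq b : sgn b * sgn b = 1.
Proof. by case: b; rewrite /sgn ?mulr1 ?mulrNN ?mulr1. Qed.

Section FourWiseSigns.
Variables (Om : finType) (p : Om -> R) (n : nat) (S : Om -> {ffun 'I_n -> bool}).
Hypothesis Hp : is_pmf p.
Hypothesis Hs : four_wise_sign p S.

Lemma prod_sgn_patterns (K : {set 'I_n}) (w : Om) :
  \prod_(j in K) sgn (S w j) =
  \sum_(b in pfamily false (mem K) (fun _ => predT))
     [forall k in K, S w k == b k]%:R * \prod_(j in K) sgn (b j).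
Proof.
pose b0 := [ffun k => (k \in K) && S w k].
have b0P : b0 \in pfamily false (mem K) (fun _ => predT).
  apply/pfamilyP; split=> //; apply/subsetP => k; rewrite !inE ffunE.
  by case: (k \in K).
have agree0 : [forall k in K, S w k == b0 k] by apply/forall_inP => k kK; rewrite ffunE kK.
rewrite (bigD1 b0) //= agree0 mul1r [X in _ + X]big1 ?addr0.
  by apply: eq_bigr => j jK; rewrite ffunE jK.
move=> b /andP[/pfamilyP[supp _] bnb0].
case: forall_inP => [agree|]; last by rewrite mul0r.
case/negP: bnb0; apply/eqP/ffunP => k; rewrite ffunE.
case: (boolP (k \in K)) => kK /=; first by rewrite (eqP (agree k kK)).
by move/subsetP: supp => /(_ k); rewrite !inE; case: (b k) => // /(_ isT); rewrite (negbTE kK).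
Qed.

Lemma sgn_prod_mean0 (K : {set 'I_n}) : (#|K| <= 4)%nat -> K != set0 ->
  Ex p (fun w => \prod_(j in K) sgn (S w j)) = 0.
Proof.
move=> cardK /set0Pn[j jK].
rewrite (Ex_ext _ (prod_sgn_patterns K)) Ex_sum.
under eq_bigr => b _.
  rewrite (Ex_ext _ (fun w => mulrC _ _)) ExZ Ex_indicator (Hs b cardK) mulrC.
over.
rewrite -mulr_sumr -(big_distr_big_dep false (mem K) (fun _ _ => true) (fun _ x => sgn x)).
by rewrite (bigD1 j) //= big_bool /sgn /= addrN mul0r mulr0.
Qed.

Lemma sgn_mean j : Ex p (fun w => sgn (S w j)) = 0.
Proof.
rewrite -(@sgn_prod_mean0 [set j]) ?cards1 //; last by apply/set0Pn; exists j; rewrite inE.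
by apply: Ex_ext => w; rewrite big_set1.
Qed.

Lemma sgn_corr j j' : Ex p (fun w => sgn (S w j) * sgn (S w j')) = (j == j')%:R.
Proof.
have [<-|ne] := eqVneq j j'; first by rewrite (Ex_ext _ (fun w => sgn_sq _)) Ex_const_pmf.
transitivity (Ex p (fun w => \prod_(k in [set j; j']) sgn (S w k))).
  by apply: Ex_ext => w; rewrite big_setU1 ?big_set1 ?inE.
rewrite sgn_prod_mean0 ?(negbTE ne) //; first by rewrite cardsU1 cards1; case: (_ \notin _).
by apply/set0Pn; exists j; rewrite !inE eqxx.
Qed.

Lemma sgn_prod4_distinct j1 j2 j3 j4 : uniq [:: j1; j2; j3; j4] ->
  Ex p (fun w => sgn (S w j1) * sgn (S w j2) * sgn (S w j3) * sgn (S w j4)) = 0.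
Proof.
rewrite /= !inE !negb_or andbT => /and3P[/and3P[n12 n13 n14] /andP[n23 n24] n34].
rewrite -(@sgn_prod_mean0 (j1 |: (j2 |: (j3 |: [set j4])))).
- apply: Ex_ext => w.
  rewrite big_setU1 /=; last by rewrite !inE !negb_or n12 n13 n14.
  rewrite big_setU1 /=; last by rewrite !inE !negb_or n23 n24.
  by rewrite big_setU1 ?big_set1 ?mulrA // !inE.
- rewrite !cardsU1 cards1.
  by case: (_ \notin _); case: (_ \notin _); case: (_ \notin _).
- by apply/set0Pn; exists j1; rewrite !inE eqxx.
Qed.

(* Fourth moments: with j1 != j2 only the pairings (j3,j4) = (j1,j2), (j2,j1) survive.
   A repeated index cancels by [sgn_sq] and leaves a second moment; four distinct
   indices give zero. *)
Lemma sgn_prod4 j1 j2 j3 j4 : j1 != j2 ->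
  Ex p (fun w => sgn (S w j1) * sgn (S w j2) * sgn (S w j3) * sgn (S w j4)) =
  ((j1 == j3) && (j2 == j4))%:R + ((j1 == j4) && (j2 == j3))%:R.
Proof.
move=> n12; have [<-|n13] := eqVneq j1 j3.
  rewrite [j2 == j1]eq_sym (negbTE n12) andbF addr0 -sgn_corr.
  by apply: Ex_ext => w; rewrite -[RHS]mul1r -(sgn_sq (S w j1)); ring.
have [<-|n14] := eqVneq j1 j4.
  rewrite /= add0r -sgn_corr.
  by apply: Ex_ext => w; rewrite -[RHS]mul1r -(sgn_sq (S w j1)); ring.
rewrite /= addr0.
have [<-|n23] := eqVneq j2 j3.
  transitivity (Ex p (fun w => sgn (S w j1) * sgn (S w j4))); last by rewrite sgn_corr (negbTE n14).
  by apply: Ex_ext => w; rewrite -[RHS]mul1r -(sgn_sq (S w j2)); ring.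
have [<-|n24] := eqVneq j2 j4.
  transitivity (Ex p (fun w => sgn (S w j1) * sgn (S w j3))); last by rewrite sgn_corr (negbTE n13).
  by apply: Ex_ext => w; rewrite -[RHS]mul1r -(sgn_sq (S w j2)); ring.
have [<-|n34] := eqVneq j3 j4.
  transitivity (Ex p (fun w => sgn (S w j1) * sgn (S w j2))); last by rewrite sgn_corr (negbTE n12).
  by apply: Ex_ext => w; rewrite -[RHS]mul1r -(sgn_sq (S w j3)); ring.
by apply: sgn_prod4_distinct; rewrite /= !inE !negb_or n12 n13 n14 n23 n24 n34.
Qed.

End FourWiseSigns.

Lemma natr_andb (b c : bool) : (b && c)%:R = b%:R * c%:R :> R.
Proof. by case: b; case: c; rewrite ?mulr1 ?mulr0. Qed.

Lemma sum_indicator (I : finType) (u : I) (F : I -> R) : \sum_i (u == i)%:R * F i = F u.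
Proof.
rewrite (bigD1 u) //= eqxx mul1r big1 ?addr0 // => i.
by rewrite eq_sym => /negbTE->; rewrite mul0r.
Qed.

Lemma sum_indicator1 (I : finType) (u : I) : \sum_i (u == i)%:R = 1 :> R.
Proof. by rewrite -[RHS](sum_indicator u (fun _ => 1)); apply: eq_bigr => i _; rewrite mulr1. Qed.

Notation seed n t := ({ffun 'I_n -> 'I_t} * {ffun 'I_n -> bool})%type.

Definition sketch (n t : nat) (x : seed n t) (a : 'cV[R]_n) : 'cV[R]_t :=
  countsketch x.1 x.2 *m a.

Lemma sketch_coord n t (x : seed n t) (a : 'cV[R]_n) (k : 'I_t) :
  sketch x a k 0 = \sum_j a j 0 * ((x.1 j == k)%:R * sgn (x.2 j)).
Proof.
rewrite !mxE; apply: eq_bigr => j _; rewrite mxE mulrC.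
by case: (x.1 j == k); rewrite ?mul1r ?mul0r.
Qed.

Section OneSketch.
Variables (Om : finType) (p : Om -> R) (n t : nat).
Variables (H : Om -> {ffun 'I_n -> 'I_t}) (S : Om -> {ffun 'I_n -> bool}).
Hypothesis Hp : is_pmf p.
Hypothesis Hh : two_wise_hash p H.
Hypothesis Hs : four_wise_sign p S.
Hypothesis HS : indep2 p H S.
Hypothesis t_gt0 : (0 < t)%nat.
Variable a : 'cV[R]_n.

Local Notation hash_fn := {ffun 'I_n -> 'I_t}.
Local Notation sign_fn := {ffun 'I_n -> bool}.

Let tR_neq0 : (t%:R : R) != 0. Proof. by rewrite pnatr_eq0 -lt0n. Qed.

Lemma hash_bucket_corr j k k' :
  Ex p (fun w => (H w j == k)%:R * (H w j == k')%:R) = (k == k')%:R / t%:R.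
Proof.
have [<-|ne] := eqVneq k k'.
  under Ex_ext => w do rewrite -natr_andb andbb.
  by rewrite Ex_indicator Hh.1 mul1r.
rewrite mul0r (Ex_ext _ (G := fun _ => 0)) ?Ex_const ?mul0r // => w.
by rewrite -natr_andb; case: eqP => // ->; rewrite (negbTE ne).
Qed.

Lemma hash_collision j j' : j != j' -> Ex p (fun w => (H w j == H w j')%:R) = t%:R^-1.
Proof.
move=> ne.
have split_buckets w : (H w j == H w j')%:R = (\sum_k ((H w j == k) && (H w j' == k))%:R :> R).
  by under eq_bigr => k _ do rewrite natr_andb; rewrite sum_indicator eq_sym.
rewrite (Ex_ext _ split_buckets) Ex_sum.
under eq_bigr => k _ do rewrite Ex_indicator (Hh.2 _ _ _ _ ne) !Hh.1.
by rewrite sumr_const card_ord -[LHS]mulr_natr mulfVK.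
Qed.

Lemma sketch_mean k : Ex p (fun w => sketch (H w, S w) a k 0) = 0.
Proof.
rewrite (Ex_ext _ (fun w => sketch_coord _ _ _)) Ex_sum big1 // => j _ /=.
rewrite ExZ (Ex_indep2 (fun h : hash_fn => (h j == k)%:R) (fun s : sign_fn => sgn (s j)) HS).
by rewrite (sgn_mean Hs) !mulr0.
Qed.

Lemma sketch_cov k k' :
  Ex p (fun w => sketch (H w, S w) a k 0 * sketch (H w, S w) a k' 0)
  = (k == k')%:R * (sqnorm a / t%:R).
Proof.
have expand w : sketch (H w, S w) a k 0 * sketch (H w, S w) a k' 0 =
    \sum_j1 \sum_j2 a j1 0 * a j2 0 *
      (((H w j1 == k)%:R * (H w j2 == k')%:R) * (sgn (S w j1) * sgn (S w j2))).
  rewrite !sketch_coord big_distrlr; apply: eq_bigr => j1 _.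
  by apply: eq_bigr => j2 _ /=; ring.
rewrite (Ex_ext _ expand) Ex_sum /sqnorm mulr_suml mulr_sumr; apply: eq_bigr => j1 _.
rewrite Ex_sum; under eq_bigr => j2 _ do
  rewrite ExZ (Ex_indep2 (fun h : hash_fn => (h j1 == k)%:R * (h j2 == k')%:R)
    (fun s : sign_fn => sgn (s j1) * sgn (s j2)) HS) (sgn_corr Hp Hs) mulrA mulrC.
by rewrite sum_indicator hash_bucket_corr expr2; ring.
Qed.

Lemma sketch_sqnorm_mean : Ex p (fun w => sqnorm (sketch (H w, S w) a)) = sqnorm a.
Proof.
have sq w : sqnorm (sketch (H w, S w) a) =
    \sum_k sketch (H w, S w) a k 0 * sketch (H w, S w) a k 0.
  by apply: eq_bigr => k _; rewrite expr2.
rewrite (Ex_ext _ sq) Ex_sum; under eq_bigr => k _ do rewrite sketch_cov eqxx mul1r.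
by rewrite sumr_const card_ord -[LHS]mulr_natr mulfVK.
Qed.

Definition distortion_term w (j1 j2 : 'I_n) :=
  (j1 != j2)%:R * (a j1 0 * a j2 0) * ((H w j1 == H w j2)%:R * (sgn (S w j1) * sgn (S w j2))).

Lemma distortion_expand w :
  sqnorm (sketch (H w, S w) a) - sqnorm a = \sum_j1 \sum_j2 distortion_term w j1 j2.
Proof.
pose X j1 j2 := a j1 0 * a j2 0 * ((H w j1 == H w j2)%:R * (sgn (S w j1) * sgn (S w j2))).
have all_pairs : sqnorm (sketch (H w, S w) a) = \sum_j1 \sum_j2 X j1 j2.
  rewrite /sqnorm; under eq_bigr => k _ do rewrite expr2 sketch_coord big_distrlr /=.
  rewrite exchange_big; apply: eq_bigr => j1 _; rewrite exchange_big; apply: eq_bigr => j2 _ /=.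
  rewrite /X [H w j1 == _]eq_sym -(sum_indicator (H w j1) (fun k => (H w j2 == k)%:R)).
  by rewrite mulr_suml mulr_sumr; apply: eq_bigr => k _; ring.
have diagonal : sqnorm a = \sum_j1 \sum_j2 (j1 == j2)%:R * X j1 j2.
  by apply: eq_bigr => j1 _; rewrite sum_indicator /X eqxx sgn_sq !mulr1 expr2.
rewrite all_pairs diagonal -sumrB; apply: eq_bigr => j1 _; rewrite -sumrB; apply: eq_bigr => j2 _.
by rewrite /distortion_term /X; case: (j1 == j2); rewrite /= ?mul1r ?mul0r ?subrr ?subr0.
Qed.

(* Mixed moments of distortion terms, from the hash collision probability and the
   fourth sign moments. *)
Lemma distortion_term_moment j1 j2 j3 j4 :
  Ex p (fun w => distortion_term w j1 j2 * distortion_term w j3 j4) =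
  (j1 != j2)%:R * (a j1 0 ^+ 2 * a j2 0 ^+ 2 / t%:R) *
  ((j1 == j3)%:R * (j2 == j4)%:R + (j2 == j3)%:R * (j1 == j4)%:R).
Proof.
have [<-|n12] := eqVneq j1 j2.
  rewrite /= !mul0r (Ex_ext _ (G := fun _ => 0)) ?Ex_const ?mul0r // => w.
  by rewrite /distortion_term eqxx !mul0r.
have [<-|n34] := eqVneq j3 j4.
  rewrite (Ex_ext _ (G := fun _ => 0)) ?Ex_const ?mul0r; last first.
    by move=> w; rewrite /distortion_term eqxx !mul0r mulr0.
  have [<-|_] := eqVneq j1 j3; last by rewrite /= !(mulr0, mul0r, addr0).
  by rewrite [j2 == j1]eq_sym (negbTE n12) /= !(mulr0, mul0r, addr0).
rewrite (Ex_ext _ (G := fun w => a j1 0 * a j2 0 * a j3 0 * a j4 0 *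
    (((H w j1 == H w j2)%:R * (H w j3 == H w j4)%:R) *
     (sgn (S w j1) * sgn (S w j2) * sgn (S w j3) * sgn (S w j4))))); last first.
  by move=> w; rewrite /distortion_term n12 n34 /=; ring.
rewrite ExZ (Ex_indep2 (fun h : hash_fn => (h j1 == h j2)%:R * (h j3 == h j4)%:R)
  (fun s : sign_fn => sgn (s j1) * sgn (s j2) * sgn (s j3) * sgn (s j4)) HS).
rewrite (sgn_prod4 Hp Hs _ _ n12) !natr_andb /=.
have collide : Ex p (fun w => (H w j1 == H w j2)%:R * (H w j1 == H w j2)%:R) = t%:R^-1.
  by under Ex_ext => w do rewrite -natr_andb andbb; rewrite hash_collision.
have [<-|n13] := eqVneq j1 j3.
  have [<-|n24] := eqVneq j2 j4; last first.
    by rewrite [j2 == j1]eq_sym (negbTE n12) !(mulr0, mul0r, addr0).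
  rewrite collide [j2 == j1]eq_sym (negbTE n12) !(mulr0, mul0r, addr0, mulr1, mul1r).
  by ring.
rewrite !(mul0r, add0r).
have [<-|n14] := eqVneq j1 j4; last by rewrite !(mulr0, mul0r).
have [<-|n23] := eqVneq j2 j3; last by rewrite !(mulr0, mul0r).
under Ex_ext => w do rewrite [H w j2 == _]eq_sym.
by rewrite collide !mulr1 mul1r; ring.
Qed.

(* Only the pairings (j3, j4) = (j1, j2) and (j2, j1) contribute. *)
Lemma distortion_row_moment j1 j2 :
  \sum_j3 \sum_j4 Ex p (fun w => distortion_term w j1 j2 * distortion_term w j3 j4) =
  (j1 != j2)%:R * (a j1 0 ^+ 2 * a j2 0 ^+ 2 / t%:R) * 2.
Proof.
have pairing (u v : 'I_n) : \sum_j3 \sum_j4 (u == j3)%:R * (v == j4)%:R = 1 :> R.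
  by under eq_bigr => j3 _ do rewrite -mulr_sumr sum_indicator1 mulr1; rewrite sum_indicator1.
under eq_bigr => j3 _ do under eq_bigr => j4 _ do rewrite distortion_term_moment.
under eq_bigr => j3 _ do rewrite -mulr_sumr.
rewrite -mulr_sumr; congr (_ * _).
under eq_bigr => j3 _ do rewrite big_split /=.
by rewrite big_split /= !pairing.
Qed.

Lemma sketch_distortion_var :
  Ex p (fun w => (sqnorm (sketch (H w, S w) a) - sqnorm a) ^+ 2) <= 2 * sqnorm a ^+ 2 / t%:R.
Proof.
have expand w : (sqnorm (sketch (H w, S w) a) - sqnorm a) ^+ 2 =
    \sum_j1 \sum_j2 \sum_j3 \sum_j4 distortion_term w j1 j2 * distortion_term w j3 j4.
  rewrite expr2 distortion_expand mulr_suml; apply: eq_bigr => j1 _.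
  rewrite mulr_suml; apply: eq_bigr => j2 _.
  by rewrite mulr_sumr; apply: eq_bigr => j3 _; rewrite mulr_sumr.
rewrite (Ex_ext _ expand) Ex_sum.
under eq_bigr => j1 _ do (rewrite Ex_sum; under eq_bigr => j2 _ do
  (rewrite Ex_sum; under eq_bigr => j3 _ do rewrite Ex_sum; rewrite distortion_row_moment)).
have -> : 2 * sqnorm a ^+ 2 / t%:R = \sum_j1 \sum_j2 2 * (a j1 0 ^+ 2 * a j2 0 ^+ 2 / t%:R).
  rewrite /sqnorm expr2 mulr_suml mulr_sumr mulr_suml; apply: eq_bigr => j1 _.
  by rewrite !mulr_sumr mulr_suml; apply: eq_bigr => j2 _; ring.
apply: ler_sum => j1 _; apply: ler_sum => j2 _.
have c_ge0 : 0 <= a j1 0 ^+ 2 * a j2 0 ^+ 2 / t%:R.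
  by rewrite divr_ge0 ?ler0n // mulr_ge0 // sqr_ge0.
case: (j1 != j2); rewrite ?mul1r ?mul0r; first by rewrite mulrC.
by rewrite mulr_ge0.
Qed.

End OneSketch.

Definition upd (I T : finType) (f : {ffun I -> T}) (i : I) (x : T) : {ffun I -> T} :=
  [ffun j => if j == i then x else f j].

Section Update.
Variables (I T : finType).
Implicit Types (f : {ffun I -> T}) (i : I) (x : T).

Lemma upd_other f i x j : j != i -> upd f i x j = f j.
Proof. by move=> ne; rewrite ffunE (negbTE ne). Qed.

Lemma upd_upd f i x y : upd (upd f i x) i y = upd f i y.
Proof. by apply/ffunP => j; rewrite !ffunE; case: (j == i). Qed.

Lemma upd_eq f i y : (upd f i y == f) = (f i == y).
Proof.
apply/eqP/eqP => [<-|fiy]; first by rewrite ffunE eqxx.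
by apply/ffunP => j; rewrite ffunE; case: eqP => [->|].
Qed.

Lemma sum_fiber_const (rho : {ffun I -> T} -> R) i x y :
  (forall f z, rho (upd f i z) = rho f) ->
  \sum_(f : {ffun I -> T} | f i == x) rho f = \sum_(f : {ffun I -> T} | f i == y) rho f.
Proof.
move=> rho_inv; rewrite (reindex_onto (fun g => upd g i x) (fun f => upd f i y)); last first.
  by move=> f /eqP fx; rewrite upd_upd -fx; apply/eqP; rewrite upd_eq.
apply: eq_big => g; first by rewrite ffunE eqxx upd_upd upd_eq eqxx.
by rewrite rho_inv.
Qed.

End Update.

Section ProductLaw.
Variables (Om : finType) (p : Om -> R) (tau : nat) (T : finType) (X : 'I_tau -> Om -> T).
Hypothesis Hp : is_pmf p.
Hypothesis HX : mutually_indep p X.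

Definition marginal (i : 'I_tau) (x : T) : R := Pr p (fun w => X i w == x).

Definition prod_law (f : {ffun 'I_tau -> T}) : R := \prod_i marginal i (f i).

Lemma Ex_prod_law (Phi : {ffun 'I_tau -> T} -> R) :
  Ex p (fun w => Phi [ffun i => X i w]) = Ex prod_law Phi.
Proof.
rewrite (Ex_pushforward p (fun w => [ffun i => X i w]) Phi); apply: eq_bigr => f _.
rewrite /prod_law /marginal -HX; congr (_ * _); apply: eq_bigl => w.
apply/eqP/forallP => [<- i|agree]; first by rewrite ffunE.
by apply/ffunP => i; rewrite ffunE; apply/eqP.
Qed.

Lemma Ex_prod_law_split i0 (F : {ffun 'I_tau -> T} -> R) (G : T -> R) :
  (forall f x, F (upd f i0 x) = F f) ->
  Ex prod_law (fun f => F f * G (f i0)) = Ex prod_law F * Ex p (fun w => G (X i0 w)).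
Proof.
move=> F_inv.
have [w0 _] : exists w0 : Om, true.
  case: (pickP (fun _ : Om => true)) => [w0 _|Om0]; first by exists w0.
  by move: Hp.2; rewrite big_pred0 // => /eqP; rewrite eq_sym oner_eq0.
pose rho f := F f * \prod_(j | j != i0) marginal j (f j).
have rho_inv f z : rho (upd f i0 z) = rho f.
  by rewrite /rho F_inv; congr (_ * _); apply: eq_bigr => j nj; rewrite upd_other.
have factor (phi : T -> R) :
    \sum_(f : {ffun 'I_tau -> T}) phi (f i0) * rho f =
    (\sum_x phi x) * \sum_(f : {ffun 'I_tau -> T} | f i0 == X i0 w0) rho f.
  rewrite (partition_big (fun f : {ffun 'I_tau -> T} => f i0) predT) //= mulr_suml.
  apply: eq_bigr => x _; rewrite -(@sum_fiber_const _ _ rho i0 x) // mulr_sumr.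
  by apply: eq_bigr => f /eqP <-.
have prodE f : prod_law f = marginal i0 (f i0) * \prod_(j | j != i0) marginal j (f j).
  by rewrite /prod_law (bigD1 i0).
have lhsE : Ex prod_law (fun f => F f * G (f i0)) =
    \sum_(f : {ffun 'I_tau -> T}) (G (f i0) * marginal i0 (f i0)) * rho f.
  by apply: eq_bigr => f _; rewrite prodE /rho; ring.
have FE : Ex prod_law F = \sum_(f : {ffun 'I_tau -> T}) marginal i0 (f i0) * rho f.
  by apply: eq_bigr => f _; rewrite prodE /rho; ring.
have mass1 : \sum_x marginal i0 x = 1.
  by rewrite -Hp.2 /marginal /Pr [RHS](partition_big (X i0) predT).
rewrite lhsE FE (factor (fun x => G x * marginal i0 x)) (factor (marginal i0)) mass1 mul1r.
by rewrite (Ex_pushforward p (X i0) G) mulrC.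
Qed.

Lemma Ex_prod_law_const c : Ex prod_law (fun _ => c) = c.
Proof. by rewrite -(Ex_prod_law (fun _ => c)) Ex_const_pmf. Qed.

Lemma Ex_prod_law_coord i0 (G : T -> R) :
  Ex prod_law (fun f => G (f i0)) = Ex p (fun w => G (X i0 w)).
Proof.
have := Ex_prod_law_split (i0 := i0) (F := fun _ => 1) G (fun _ _ => erefl).
rewrite Ex_prod_law_const mul1r => <-.
by apply: Ex_ext => f; rewrite mul1r.
Qed.

End ProductLaw.

Arguments Ex_prod_law_split {Om p tau T} X Hp i0 F G.

Lemma sqnormD k (u v : 'cV[R]_k) :
  sqnorm (u + v) = sqnorm u + 2 * (\sum_i u i 0 * v i 0) + sqnorm v.
Proof. by rewrite /sqnorm mulr_sumr -!big_split /=; apply: eq_bigr => i _; rewrite mxE; ring. Qed.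

Lemma sqnormZ k c (v : 'cV[R]_k) : sqnorm (c *: v) = c ^+ 2 * sqnorm v.
Proof. by rewrite /sqnorm mulr_sumr; apply: eq_bigr => i _; rewrite mxE exprMn. Qed.

Lemma sqnorm_ge0 k (v : 'cV[R]_k) : 0 <= sqnorm v.
Proof. by apply: sumr_ge0 => i _; apply: sqr_ge0. Qed.

Lemma sqnorm0 k : sqnorm (0 : 'cV[R]_k) = 0.
Proof. by rewrite /sqnorm big1 // => i _; rewrite mxE expr0n. Qed.

Section PartialSums.
Variables (Om : finType) (p : Om -> R) (tau n t : nat).
Variables (h : 'I_tau -> Om -> {ffun 'I_n -> 'I_t}) (s : 'I_tau -> Om -> {ffun 'I_n -> bool}).
Hypothesis Hp : is_pmf p.
Hypothesis Hf : countsketch_family p h s.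
Hypothesis t_gt0 : (0 < t)%nat.
Variable a : 'I_tau -> 'cV[R]_n.

Definition seeds i w : seed n t := (h i w, s i w).
Local Notation law := (prod_law p seeds).

Definition partial_sketch m (f : {ffun 'I_tau -> seed n t}) :=
  \sum_(i : 'I_tau | (i < m)%nat) sketch (f i) (a i).
Definition partial_mass m := \sum_(i : 'I_tau | (i < m)%nat) sqnorm (a i).
Definition partial_distortion m f := sqnorm (partial_sketch m f) - partial_mass m.

Lemma partial_sketch_mean m k : Ex law (fun f => partial_sketch m f k 0) = 0.
Proof.
rewrite (Ex_ext _ (fun f => summxE _ _ _ _ _)) Ex_sum big1 // => i _.
rewrite (Ex_prod_law_coord Hp Hf.1 i (fun x => sketch x (a i) k 0)).
exact: (sketch_mean (Hf.2.2.1 i) (Hf.2.2.2 i)).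
Qed.

Section Step.
Variables (m : nat) (i0 : 'I_tau).
Hypothesis i0_m : val i0 = m.

Let below_succ (i : 'I_tau) : ((i < m.+1)%nat && (i != i0)) = (i < m)%nat.
Proof. by rewrite -(inj_eq val_inj) i0_m ltnS ltn_neqAle andbC. Qed.

Lemma partial_sketch_upd f x : partial_sketch m (upd f i0 x) = partial_sketch m f.
Proof.
apply: eq_bigr => i ltim; rewrite upd_other //.
by apply: contraTneq ltim => ->; rewrite i0_m ltnn.
Qed.

Lemma partial_sketch_succ f : partial_sketch m.+1 f = partial_sketch m f + sketch (f i0) (a i0).
Proof.
by rewrite /partial_sketch (bigD1 i0) /= ?i0_m // addrC; congr (_ + _); apply: eq_bigl.
Qed.

Lemma partial_mass_succ : partial_mass m.+1 = partial_mass m + sqnorm (a i0).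
Proof.
by rewrite /partial_mass (bigD1 i0) /= ?i0_m // addrC; congr (_ + _); apply: eq_bigl.
Qed.

Definition cross f := \sum_k partial_sketch m f k 0 * sketch (f i0) (a i0) k 0.
Definition new_distortion (x : seed n t) := sqnorm (sketch x (a i0)) - sqnorm (a i0).

Lemma partial_distortion_succ f :
  partial_distortion m.+1 f = partial_distortion m f + 2 * cross f + new_distortion (f i0).
Proof.
rewrite /partial_distortion partial_sketch_succ partial_mass_succ sqnormD.
by rewrite /new_distortion /cross; ring.
Qed.

Lemma Ex_centred_product (F : {ffun 'I_tau -> seed n t} -> R) (G : seed n t -> R) :
  (forall f x, F (upd f i0 x) = F f) -> Ex p (fun w => G (seeds i0 w)) = 0 ->
  Ex law (fun f => F f * G (f i0)) = 0.
Proof. by move=> F_upd G0; rewrite Ex_prod_law_split // G0 mulr0. Qed.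

Let new_sketch_mean k : Ex p (fun w => sketch (seeds i0 w) (a i0) k 0) = 0.
Proof. exact: (sketch_mean (Hf.2.2.1 i0) (Hf.2.2.2 i0)). Qed.

Let new_distortion_mean : Ex p (fun w => new_distortion (seeds i0 w)) = 0.
Proof.
rewrite ExB (Ex_const_pmf _ Hp).
by rewrite (sketch_sqnorm_mean Hp (Hf.2.1 i0) (Hf.2.2.1 i0) (Hf.2.2.2 i0) t_gt0) subrr.
Qed.

Lemma Ex_cross : Ex law cross = 0.
Proof.
rewrite /cross Ex_sum big1 // => k _.
apply: (Ex_centred_product (G := fun x => sketch x (a i0) k 0)) (new_sketch_mean k) => f x.
by rewrite partial_sketch_upd.
Qed.

Lemma Ex_distortion_cross : Ex law (fun f => partial_distortion m f * cross f) = 0.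
Proof.
have split_cross f : partial_distortion m f * cross f =
    \sum_k partial_distortion m f * partial_sketch m f k 0 * sketch (f i0) (a i0) k 0.
  by rewrite /cross mulr_sumr; apply: eq_bigr => k _; rewrite mulrA.
rewrite (Ex_ext _ split_cross) Ex_sum big1 // => k _.
apply: (Ex_centred_product (G := fun x => sketch x (a i0) k 0)) (new_sketch_mean k) => f x.
by rewrite /partial_distortion partial_sketch_upd.
Qed.

Lemma Ex_distortion_new : Ex law (fun f => partial_distortion m f * new_distortion (f i0)) = 0.
Proof.
apply: (Ex_centred_product (G := new_distortion)) new_distortion_mean => f x.
by rewrite /partial_distortion partial_sketch_upd.
Qed.

Lemma Ex_cross_new : Ex law (fun f => cross f * new_distortion (f i0)) = 0.
Proof.
have split_cross f : cross f * new_distortion (f i0) =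
    \sum_k partial_sketch m f k 0 * (sketch (f i0) (a i0) k 0 * new_distortion (f i0)).
  by rewrite /cross mulr_suml; apply: eq_bigr => k _; rewrite mulrA.
rewrite (Ex_ext _ split_cross) Ex_sum big1 // => k _.
rewrite (Ex_prod_law_split seeds Hp i0 (fun f => partial_sketch m f k 0)
  (fun x => sketch x (a i0) k 0 * new_distortion x)); last first.
  by move=> f x; rewrite partial_sketch_upd.
by rewrite partial_sketch_mean mul0r.
Qed.

(* Second moment of the cross term: E |Z_m|^2 * |a_i0|^2 / t, where E |Z_m|^2 = M_m
   because the distortion V_m is centred. *)
Lemma Ex_cross_sq : Ex law (partial_distortion m) = 0 ->
  Ex law (fun f => cross f ^+ 2) = partial_mass m * (sqnorm (a i0) / t%:R).
Proof.
move=> V0.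
pose Z f k := partial_sketch m f k 0.
have expand f : cross f ^+ 2 =
    \sum_k \sum_k' Z f k * Z f k' * (sketch (f i0) (a i0) k 0 * sketch (f i0) (a i0) k' 0).
  rewrite /cross expr2 mulr_suml; apply: eq_bigr => k _.
  by rewrite mulr_sumr; apply: eq_bigr => k' _ /=; rewrite /Z; ring.
have term k k' : Ex law (fun f => Z f k * Z f k' *
      (sketch (f i0) (a i0) k 0 * sketch (f i0) (a i0) k' 0)) =
    (k == k')%:R * (Ex law (fun f => Z f k * Z f k') * (sqnorm (a i0) / t%:R)).
  rewrite (Ex_prod_law_split seeds Hp i0 (fun f => Z f k * Z f k')
    (fun x => sketch x (a i0) k 0 * sketch x (a i0) k' 0)); last first.
    by move=> f x; rewrite /Z partial_sketch_upd.
  by rewrite (sketch_cov Hp (Hf.2.1 i0) (Hf.2.2.1 i0) (Hf.2.2.2 i0)); ring.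
have Z_sqnorm : Ex law (fun f => \sum_k Z f k * Z f k) = partial_mass m.
  rewrite (Ex_ext _ (G := fun f => partial_distortion m f + partial_mass m)); last first.
    by move=> f; rewrite /partial_distortion subrK; apply: eq_bigr => k _; rewrite expr2.
  by rewrite ExD V0 add0r (Ex_prod_law_const Hp Hf.1).
rewrite (Ex_ext _ expand) Ex_sum.
under eq_bigr => k _ do (rewrite Ex_sum; under eq_bigr => k' _ do rewrite term).
by under eq_bigr => k _ do rewrite sum_indicator; rewrite -mulr_suml -Ex_sum Z_sqnorm.
Qed.

Lemma distortion_moments_succ :
  Ex law (partial_distortion m) = 0 ->
  Ex law (fun f => partial_distortion m f ^+ 2) <= 2 * partial_mass m ^+ 2 / t%:R ->
  Ex law (partial_distortion m.+1) = 0 /\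
  Ex law (fun f => partial_distortion m.+1 f ^+ 2) <= 2 * partial_mass m.+1 ^+ 2 / t%:R.
Proof.
move=> V0 V2.
have D2 : Ex law (fun f => new_distortion (f i0) ^+ 2) <= 2 * sqnorm (a i0) ^+ 2 / t%:R.
  rewrite (Ex_prod_law_coord Hp Hf.1 i0 (fun x => new_distortion x ^+ 2)).
  exact: (sketch_distortion_var Hp (Hf.2.1 i0) (Hf.2.2.1 i0) (Hf.2.2.2 i0)).
split.
  rewrite (Ex_ext _ partial_distortion_succ) ExD ExD ExZ V0 Ex_cross.
  by rewrite (Ex_prod_law_coord Hp Hf.1 i0 new_distortion) new_distortion_mean mulr0 !addr0.
have expand f : partial_distortion m.+1 f ^+ 2 =
    partial_distortion m f ^+ 2 + 4 * cross f ^+ 2 + new_distortion (f i0) ^+ 2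
    + 4 * (partial_distortion m f * cross f) + 2 * (partial_distortion m f * new_distortion (f i0))
    + 4 * (cross f * new_distortion (f i0)).
  by rewrite partial_distortion_succ; ring.
rewrite (Ex_ext _ expand) !ExD !ExZ Ex_distortion_cross Ex_distortion_new Ex_cross_new.
rewrite (Ex_cross_sq V0) partial_mass_succ !mulr0 !addr0.
set M := partial_mass m; set A := sqnorm (a i0).
have -> : 2 * (M + A) ^+ 2 / t%:R = 2 * M ^+ 2 / t%:R + 4 * (M * (A / t%:R)) + 2 * A ^+ 2 / t%:R.
  by ring.
by rewrite lerD // lerD2r.
Qed.

End Step.

Lemma distortion_moments m : (m <= tau)%nat ->
  Ex law (partial_distortion m) = 0 /\
  Ex law (fun f => partial_distortion m f ^+ 2) <= 2 * partial_mass m ^+ 2 / t%:R.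
Proof.
elim: m => [_|m IH lt_m_tau].
  have V0 f : partial_distortion 0 f = 0.
    by rewrite /partial_distortion /partial_sketch /partial_mass !big_pred0 // sqnorm0 subrr.
  have V2_0 f : partial_distortion 0 f ^+ 2 = 0 by rewrite V0 expr0n.
  rewrite (Ex_ext _ V0) (Ex_ext _ V2_0) (Ex_prod_law_const Hp Hf.1).
  by rewrite /partial_mass big_pred0 // expr0n /= mulr0 mul0r.
have [V0 V2] := IH (ltnW lt_m_tau).
exact: (distortion_moments_succ (i0 := Ordinal lt_m_tau) erefl V0 V2).
Qed.

Lemma sketch_sum_distortion_var :
  Ex p (fun w => partial_distortion tau [ffun i => seeds i w] ^+ 2)
  <= 2 * partial_mass tau ^+ 2 / t%:R.
Proof.
rewrite (Ex_prod_law Hf.1 (fun f => partial_distortion tau f ^+ 2)).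
by have [_ ->] := distortion_moments (leqnn tau).
Qed.

End PartialSums.

Section Chebyshev.
Variables (Om : finType) (p : Om -> R) (V : Om -> R).
Hypothesis Hp : is_pmf p.

Let term_ge0 w : 0 <= V w ^+ 2 * p w.
Proof. by rewrite mulr_ge0 ?sqr_ge0 ?Hp.1. Qed.

Lemma chebyshev d : 0 <= d ->
  d ^+ 2 * Pr p (fun w => ~~ (`|V w| <= d)) <= Ex p (fun w => V w ^+ 2).
Proof.
move=> d_ge0; rewrite /Pr mulr_sumr /Ex [X in _ <= X](bigID (fun w => ~~ (`|V w| <= d))) /=.
rewrite -[X in X <= _]addr0; apply: lerD; last exact: sumr_ge0.
apply: ler_sum => w; rewrite -ltNge => lt_d_V.
rewrite ler_wpM2r ?Hp.1 // -(real_normK (num_real (V w))).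
by rewrite lerXn2r ?nnegrE ?normr_ge0 // ltW.
Qed.

Lemma second_moment0_tail : Ex p (fun w => V w ^+ 2) <= 0 ->
  Pr p (fun w => ~~ (`|V w| <= 0)) = 0.
Proof.
move=> V2_le0.
have V2_eq0 : \sum_w V w ^+ 2 * p w = 0 by apply/eqP; rewrite eq_le V2_le0 sumr_ge0.
have /= terms0 := psumr_eq0P (fun w _ => term_ge0 w) V2_eq0.
apply: big1 => w; rewrite -ltNge normr_gt0 => Vw_neq0.
by move/eqP: (terms0 w isT); rewrite mulf_eq0 expf_eq0 /= (negbTE Vw_neq0) => /eqP.
Qed.

Lemma Pr_complement (E : Om -> bool) : Pr p E = 1 - Pr p (fun w => ~~ E w).
Proof. by rewrite -Hp.2 (bigID E) /= /Pr addrK. Qed.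

Lemma concentration_from_variance (M : R) (t : nat) : 0 <= M -> (0 < t)%nat ->
  Ex p (fun w => V w ^+ 2) <= 2 * M ^+ 2 / t%:R ->
  99%:R / 100%:R <= Pr p (fun w => `|V w| <= 20 / Num.sqrt t%:R * M).
Proof.
move=> M_ge0 t_gt0 V2_le.
set d := 20 / Num.sqrt t%:R * M.
suff fail_le : Pr p (fun w => ~~ (`|V w| <= d)) <= 200^-1.
  by rewrite Pr_complement ler_pdivrMr ?ltr0n //; lra.
have [M0|M_neq0] := eqVneq M 0.
  rewrite /d M0 mulr0 second_moment0_tail ?invr_ge0 ?ler0n //.
  by move: V2_le; rewrite M0 expr0n /= mulr0 mul0r.
have sqrt_t_gt0 : 0 < Num.sqrt (t%:R : R) by rewrite sqrtr_gt0 ltr0n.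
have d_gt0 : 0 < d by rewrite /d mulr_gt0 ?divr_gt0 // lt_def M_neq0 M_ge0.
have d2 : d ^+ 2 = 400 * (M ^+ 2 / t%:R).
  by rewrite /d !exprMn exprVn sqr_sqrtr ?ler0n //; field; rewrite pnatr_eq0 -lt0n.
have K_gt0 : 0 < M ^+ 2 / t%:R by rewrite divr_gt0 ?ltr0n // exprn_gt0 // lt_def M_neq0 M_ge0.
have := le_trans (chebyshev (ltW d_gt0)) V2_le; rewrite d2 -[2 * _ / _]mulrA.
move: K_gt0; set K := M ^+ 2 / t%:R; set q := Pr _ _; nra.
Qed.

End Chebyshev.

Theorem theorem2 :
  exists C : R, 0 < C /\
  forall (tau n m t : nat), (0 < tau)%nat -> (0 < n)%nat -> (0 < m)%nat -> (0 < t)%nat ->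
  forall (W : 'I_tau -> 'M[R]_(n, m)) (alpha : 'I_tau -> R),
  (forall i, 0 <= alpha i) ->
  forall (Omega : finType) (p : Omega -> R)
         (h : 'I_tau -> Omega -> {ffun 'I_n -> 'I_t})
         (s : 'I_tau -> Omega -> {ffun 'I_n -> bool}),
  is_pmf p -> countsketch_family p h s ->
  forall theta : 'cV[R]_m,
  Pr p (fun w =>
    `| sqnorm ((\sum_(i < tau) Num.sqrt (alpha i) *:
                  (countsketch (h i w) (s i w) *m W i)) *m theta)
       - \sum_(i < tau) alpha i * sqnorm (W i *m theta) |
    <= C / Num.sqrt (t%:R) * \sum_(i < tau) alpha i * sqnorm (W i *m theta))
  >= 99%:R / 100%:R.
Proof.
exists 20; split; first by rewrite ltr0n.
move=> tau n m t _ _ _ t_gt0 W alpha alpha_ge0 Om p h s Hp Hf theta.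
pose a i := Num.sqrt (alpha i) *: (W i *m theta).
have mass : \sum_(i < tau) alpha i * sqnorm (W i *m theta) = partial_mass a tau.
  rewrite /partial_mass; apply: eq_big => [i|i _]; first by rewrite ltn_ord.
  by rewrite /a sqnormZ sqr_sqrtr.
have sketched w : (\sum_(i < tau) Num.sqrt (alpha i) *: (countsketch (h i w) (s i w) *m W i))
    *m theta = partial_sketch a tau [ffun i => seeds h s i w].
  rewrite mulmx_suml /partial_sketch; apply: eq_big => [i|i _]; first by rewrite ltn_ord.
  by rewrite ffunE /sketch /seeds /a -scalemxAr mulmxA scalemxAl.
rewrite mass /Pr; under eq_bigl => w do rewrite sketched.
apply: (concentration_from_variance Hp) => //.
  by apply: sumr_ge0 => i _; apply: sqnorm_ge0.
exact: sketch_sum_distortion_var.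
Qed.
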